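(* Let $\varphi(x)=\sum_{i\ge0}\gamma_i x^i\in\mathbb{C}[[x]]$. Then $\varphi(x)$ is symplectic if and only if for every $n\ge0$, $$\gamma_{2n+1}=\sum_i {n \brack i}\gamma_{2i}.$$ In particular, for every choice of $\gamma_0,\gamma_2,\gamma_4,\dots\in\mathbb{C}$ there is a unique symplectic power series with these even coefficients, determined by this rule.
   Context: A formal power series $\varphi(x)=\sum_{i\ge0}\gamma_i x^i$ is called symplectic if for every $m\ge1$ one has $\sum_{k=0}^{m-1}(-1)^k\binom{m-1}{k}\gamma_{m+k}=0$. The Euler polynomials $E_n(x)$ are defined by $\frac{2e^{xt}}{e^t+1}=\sum_{n\ge0}E_n(x)\frac{t^n}{n!}$. For $n\ge0$ the integers ${n\brack i}$ are defined by $x\big(x^{2n}-E_{2n}(x)\big)=\sum_i {n\brack i}x^{2i}$ (the polynomial $x^{2n}-E_{2n}(x)$ contains only odd powers of $x$); in particular ${n\brack i}=0$ for $i\le0$ or $i>n$. *)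

From HB Require Import structures.
From mathcomp Require Import all_boot all_order all_algebra.
From mathcomp Require Import complex.
From mathcomp Require Import reals.
Set Implicit Arguments. Unset Strict Implicit. Unset Printing Implicit Defensive.
Import Order.TTheory GRing.Theory Num.Theory.
Local Open Scope ring_scope.

(* A formal power series \sum_i gamma_i x^i is represented by its
   coefficient sequence gamma : nat -> F. *)
Definition symplectic (F : pzRingType) (gamma : nat -> F) : Prop :=
  forall m : nat, (1 <= m)%N ->
    \sum_(k < m) (-1) ^+ k * ('C(m.-1, k))%:R * gamma (m + k)%N = 0.

(* Comparing the coefficients of t^n/n! in
   2 e^{xt} = (e^t + 1) * \sum_n E_n(x) t^n/n!  gives
   2 x^n = E_n(x) + \sum_{k<=n} C(n,k) E_k(x), i.e.
   E_n(x) = x^n - 1/2 \sum_{k<n} C(n,k) E_k(x).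
   euler_upto n = [:: E_0; ...; E_n]. *)
Fixpoint euler_upto (n : nat) : seq {poly rat} :=
  match n with
  | 0 => [:: 1]
  | n'.+1 =>
      let s := euler_upto n' in
      rcons s ('X ^+ n'.+1 - 2%:R^-1 *: \sum_(k < n'.+1) ('C(n'.+1, k))%:R *: s`_k)
  end.

Definition euler_poly (n : nat) : {poly rat} := (euler_upto n)`_n.

Definition ebrack (n i : nat) : rat :=
  ('X * ('X ^+ (2 * n) - euler_poly (2 * n)))`_(2 * i).

From HB Require Import structures.
From mathcomp Require Import all_boot all_order all_algebra.
From mathcomp Require Import complex.
From mathcomp Require Import reals.
From mathcomp Require Import ring zify.
From mathcomp Require Import boolp.
Set Implicit Arguments. Unset Strict Implicit. Unset Printing Implicit Defensive.
Import Order.TTheory GRing.Theory Num.Theory.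
Local Open Scope ring_scope.

(* Let L be the linear functional on polynomials with L(x^k) = gamma_k.  As
   x^m (1 - x)^(m-1) = x (x - x^2)^(m-1), the series is symplectic iff L
   vanishes on x q(x - x^2) for every polynomial q.  The Euler polynomial
   E_2n is invariant under x |-> 1 - x, hence a polynomial of degree n in
   x - x^2, so these conditions amount to L(x E_2n) = 0 for all n.  Finally
   x (x^2n - E_2n) is even with coefficients [n brack i], so that
   L(x E_2n) = gamma_(2n+1) - sum_i [n brack i] gamma_2i. *)

Lemma comp_poly_XaddC1 (R : comNzRingType) (p : {poly R}) :
  p \Po ('X + 1) = \sum_(i < size p) p^`N(i).
Proof.
rewrite /comp_poly (nderiv_taylor _ (commr1 'X)) size_map_polyC.
apply: eq_bigr => i _; rewrite expr1n mulr1 nderivn_map.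
by rewrite -/(comp_poly 'X _) comp_polyXr.
Qed.

Lemma antiperiodic_poly_eq0 (R : numDomainType) (p : {poly R}) :
  p \Po ('X + 1) = - p -> p = 0.
Proof.
move=> p_antiper; apply/eqP; rewrite -lead_coef_eq0 -eqNr -lead_coefN -p_antiper.
by rewrite -polyC1 lead_coef_comp ?size_XaddC // lead_coefXaddC expr1n mulr1.
Qed.

Lemma comp_1subX_XaddC1 (R : comNzRingType) : (1 - 'X) \Po ('X + 1) = - 'X :> {poly R}.
Proof.
by rewrite comp_polyB comp_polyX -polyC1 comp_polyC polyC1 opprD addrCA subrr addr0.
Qed.

Lemma comp_polyNX_even_odd (R : comNzRingType) (p : {poly R}) :
  p \Po - 'X = even_poly p \Po 'X^2 - (odd_poly p \Po 'X^2) * 'X.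
Proof.
have sqrNX : 'X^2 \Po - 'X = 'X^2 :> {poly R} by rewrite comp_Xn_poly sqrrN.
rewrite -{1}[p]poly_even_odd comp_polyD comp_polyM -!comp_polyA sqrNX comp_polyX.
by rewrite mulrN.
Qed.

Lemma even_fun_even_poly (R : numFieldType) (p : {poly R}) :
  p \Po - 'X = p -> even_poly p \Po 'X^2 = p.
Proof.
move=> p_even; have := poly_even_odd p; have := comp_polyNX_even_odd p.
set e := even_poly p \Po _; set o := _ * 'X => p_NX p_eo.
have : o *+ 2 = 0 by rewrite -(subrr p) -{2}p_even p_NX -{1}p_eo; ring.
rewrite -scaler_nat => /eqP; rewrite scaler_eq0 pnatr_eq0 orFb => /eqP o0.
by rewrite -[RHS]p_eo o0 addr0.
Qed.

(* Shifting by 1/2 makes p even, so p(x + 1/2) = e(x^2), and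
   (x - 1/2)^2 = 1/4 - (x - x^2). *)
Lemma symmetric_poly_comp (R : numFieldType) (p : {poly R}) :
  p \Po (1 - 'X) = p -> exists f, p = f \Po ('X - 'X^2).
Proof.
move=> p_sym; pose c : R := 2^-1.
have c2 : c%:P + c%:P = 1 :> {poly R}.
  by rewrite -polyCD -mulr2n -mulr_natr mulVf ?pnatr_eq0.
set q := p \Po ('X + c%:P).
have q_even : q \Po - 'X = q.
  have shift_NX : ('X + c%:P) \Po - 'X = (1 - 'X) \Po ('X + c%:P).
    rewrite comp_polyD comp_polyB !comp_polyX comp_polyC -polyC1 comp_polyC polyC1.
    by rewrite -c2; ring.
  by rewrite /q -comp_polyA shift_NX comp_polyA p_sym.
exists (even_poly q \Po ((c * c)%:P - 'X)).
have sqr_shift : ((c * c)%:P - 'X) \Po ('X - 'X^2) = 'X^2 \Po ('X - c%:P).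
  rewrite comp_polyB comp_polyC comp_polyX comp_Xn_poly polyCM.
  transitivity ('X^2 - (c%:P + c%:P) * 'X + c%:P * c%:P); last by ring.
  by rewrite c2 mul1r; ring.
by rewrite -comp_polyA sqr_shift comp_polyA (even_fun_even_poly q_even) comp_polyXaddC_K.
Qed.

Lemma poly_span_size_basis (K : fieldType) (P : {poly K} -> Prop) :
    P 0 -> (forall c p q, P p -> P q -> P (c *: p + q)) ->
    (forall n, exists2 b : {poly K}, size b = n.+1 & P b) ->
  forall p, P p.
Proof.
move=> P0 P_lin P_basis p; elim: {p}(size p) {-2}p (leqnn (size p)) => [|n IH] p.
  by rewrite size_poly_leq0 => /eqP ->.
move=> le_pn; have [b size_b Pb] := P_basis n.
have b_neq0 : lead_coef b != 0 by rewrite lead_coef_eq0 -size_poly_gt0 size_b.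
pose a := p`_n / lead_coef b.
rewrite -(addrNK (a *: b) p) addrC; apply: P_lin => //; apply: IH.
apply/leq_sizeP => j; rewrite leq_eqVlt => /orP[/eqP <-|lt_nj].
  by rewrite coefB coefZ [b`_n](_ : _ = lead_coef b) ?divfK ?subrr // lead_coefE size_b.
have [p_j b_j] : p`_j = 0 /\ b`_j = 0.
  by split; apply: nth_default; [exact: leq_trans le_pn lt_nj | rewrite size_b].
by rewrite coefB coefZ p_j b_j mulr0 subrr.
Qed.

Local Notation E := euler_poly.

Lemma size_euler_upto n : size (euler_upto n) = n.+1.
Proof. by elim: n => //= n IH; rewrite size_rcons IH. Qed.

Lemma nth_euler_upto n k : (k <= n)%N -> (euler_upto n)`_k = E k.
Proof.
elim: n => [|n IH]; first by rewrite leqn0 => /eqP->.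
rewrite leq_eqVlt => /orP[/eqP->//|]; rewrite ltnS => lt_kn.
by rewrite /= nth_rcons size_euler_upto ltnS lt_kn IH.
Qed.

Lemma euler_polyE n : E n = 'X^n - 2%:R^-1 *: \sum_(k < n) 'C(n, k)%:R *: E k.
Proof.
case: n => [|n]; first by rewrite big_ord0 scaler0 subr0 expr0.
rewrite {1}/euler_poly /= nth_rcons size_euler_upto ltnn eqxx.
by congr (_ - _ *: _); apply: eq_bigr => k _; rewrite nth_euler_upto // -ltnS.
Qed.

Lemma size_Xn_sub_euler_poly n : (size ('X^n - E n)%R <= n)%N.
Proof.
elim/ltn_ind: n => n IH; rewrite [E n]euler_polyE opprB addrC subrK.
rewrite (leq_trans (size_scale_leq _ _)) // (leq_trans (size_sum _ _ _)) //.
apply/bigmax_leqP => k _; rewrite (leq_trans (size_scale_leq _ _)) //.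
rewrite -(subKr 'X^k (E k)) (leq_trans (size_polyD _ _)) // size_polyN.
by rewrite size_polyXn geq_max ltn_ord (leq_trans (IH _ (ltn_ord k))) // ltnW.
Qed.

Lemma size_euler_poly n : size (E n) = n.+1.
Proof.
rewrite -(subKr 'X^n (E n)) size_polyDl ?size_polyXn //.
by rewrite size_polyN ltnS size_Xn_sub_euler_poly.
Qed.

Lemma deriv_euler_poly n : (E n.+1)^`() = E n *+ n.+1.
Proof.
elim/ltn_ind: n => n IH; rewrite [E n.+1]euler_polyE derivB derivZ derivXn /=.
rewrite raddf_sum big_ord_recl /= derivZ derivC scaler0 add0r.
rewrite [E n]euler_polyE mulrnBl scalerMnr -sumrMnl; congr (_ - _ *: _).
apply: eq_bigr => j _; rewrite /bump /= add1n derivZ IH // -!scaler_nat.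
by rewrite !scalerA -!natrM mulnC -mul_bin_diag mulnC.
Qed.

Lemma derivn_euler_poly n i : (i <= n)%N -> (E n)^`(i) = E (n - i) *+ n ^_ i.
Proof.
elim: i => [|i IH] le_in; first by rewrite derivn0 subn0 ffactn0 mulr1n.
rewrite derivnS IH ?(ltnW le_in) // derivMn -(subnSK le_in) deriv_euler_poly.
by rewrite -mulrnA ffactnSr mulnC subnSK.
Qed.

Lemma nderivn_euler_poly n i : (i <= n)%N -> (E n)^`N(i) = 'C(n, i)%:R *: E (n - i).
Proof.
move=> le_in; have i_fact_neq0 : i`!%:R != 0 :> rat by rewrite pnatr_eq0 -lt0n fact_gt0.
apply: (scalerI i_fact_neq0).
by rewrite !scaler_nat -nderivn_def derivn_euler_poly // -mulrnA -bin_ffact.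
Qed.

Lemma euler_poly_shift n : E n \Po ('X + 1) = \sum_(k < n.+1) 'C(n, k)%:R *: E k.
Proof.
rewrite comp_poly_XaddC1 size_euler_poly (reindex_inj rev_ord_inj) /=.
apply: eq_bigr => i _; have le_in : (i <= n)%N by rewrite -ltnS.
by rewrite nderivn_euler_poly subSS ?leq_subr // subKn // bin_sub.
Qed.

Lemma euler_poly_shiftD n : E n \Po ('X + 1) + E n = 'X^n *+ 2.
Proof.
rewrite euler_poly_shift big_ord_recr /= binn scale1r.
have -> : \sum_(k < n) 'C(n, k)%:R *: E k = 2%:R *: ('X^n - E n).
  by rewrite [E n in RHS]euler_polyE subKr scalerA divff ?scale1r.
by rewrite scalerBr -addrA -mulr2n -!scaler_nat subrK.
Qed.

(* Both sides solve f(x + 1) + f(x) = 2 x^n, whose solution is unique by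
   antiperiodic_poly_eq0. *)
Lemma euler_poly_reflect n : E n \Po (1 - 'X) = (-1) ^+ n *: E n.
Proof.
have X1_NX : ('X + 1) \Po (- 'X) = 1 - 'X :> {poly rat}.
  by rewrite comp_polyD comp_polyX -polyC1 comp_polyC polyC1 addrC.
have sign_sqr : (-1) ^+ n * (-1) ^+ n = 1 :> rat.
  by rewrite -exprMn mulrNN mulr1 expr1n.
pose H := (-1) ^+ n *: (E n \Po (1 - 'X)).
have H_shiftD : H \Po ('X + 1) + H = 'X^n *+ 2.
  rewrite /H comp_polyZ -comp_polyA comp_1subX_XaddC1.
  rewrite -[in E n \Po (1 - 'X)]X1_NX comp_polyA -scalerDr -comp_polyD addrC.
  rewrite euler_poly_shiftD -scaler_nat comp_polyZ comp_Xn_poly -scaleN1r exprZn.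
  by rewrite !scalerA mulrAC sign_sqr mul1r scaler_nat.
have E_eq_H : E n = H.
  apply: subr0_eq; apply: antiperiodic_poly_eq0.
  rewrite comp_polyB (canRL (addrK _) (euler_poly_shiftD n)) (canRL (addrK _) H_shiftD).
  ring.
by rewrite {2}E_eq_H /H scalerA sign_sqr scale1r.
Qed.

Lemma euler_poly_even_compNX n : E (2 * n) \Po - 'X = 'X^(2 * n) *+ 2 - E (2 * n).
Proof.
rewrite -comp_1subX_XaddC1 comp_polyA euler_poly_reflect -signr_odd oddM scale1r.
by rewrite -(euler_poly_shiftD (2 * n)) addrK.
Qed.

Lemma X_euler_rest_expansion n :
  'X * ('X^(2 * n) - E (2 * n)) = \sum_(i < n.+1) ebrack n i *: 'X^(2 * i).
Proof.
set P := 'X * _.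
have P_even : P \Po - 'X = P.
  rewrite comp_polyM comp_polyB euler_poly_even_compNX comp_Xn_poly comp_polyX.
  by rewrite -mulN1r exprMn -signr_odd oddM mul1r /P; ring.
have size_P : (size P <= (n.+1).*2)%N.
  rewrite (leq_trans (size_polyMleq _ _)) // size_polyX add2n doubleS ltnS -mul2n.
  exact: leq_trans (size_Xn_sub_euler_poly _) (leqnSn _).
rewrite -(even_fun_even_poly P_even) (even_polyE size_P) poly_def raddf_sum.
by apply: eq_bigr => i _; rewrite /= comp_polyZ comp_Xn_poly -exprM /ebrack mul2n.
Qed.

Lemma euler_poly_comp n : exists2 f, E (2 * n) = f \Po ('X - 'X^2) & size f = n.+1.
Proof.
have [f E_f] : exists f, E (2 * n) = f \Po ('X - 'X^2).
  by apply: symmetric_poly_comp; rewrite euler_poly_reflect -signr_odd oddM scale1r.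
exists f => //; have f_neq0 : f != 0.
  by apply/eqP=> f0; move: (size_euler_poly (2 * n)); rewrite E_f f0 comp_poly0 size_poly0.
have size_u : size ('X - 'X^2 : {poly rat}) = 3.
  by rewrite addrC size_polyDl size_polyN size_polyXn // size_polyX.
have := size_comp_poly f ('X - 'X^2); rewrite -E_f size_euler_poly size_u /=.
by rewrite (polySpred f_neq0) /=; lia.
Qed.

Section MomentFunctional.

Variables (F : numFieldType) (gamma : nat -> F).
Implicit Types (p q : {poly rat}) (c : rat).

Definition moment p : F := \sum_(j < size p) ratr p`_j * gamma j.

Lemma moment_widen N p :
  (size p <= N)%N -> moment p = \sum_(j < N) ratr p`_j * gamma j.
Proof.
move=> le_pN; rewrite /moment (big_ord_widen N (fun j => ratr p`_j * gamma j) le_pN).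
rewrite big_mkcond; apply: eq_bigr => j _; case: ltnP => // le_pj.
by rewrite nth_default // rmorph0 mul0r.
Qed.

Fact moment_is_zmod_morphism : zmod_morphism moment.
Proof.
move=> p q; pose N := maxn (size p) (size q).
have le_pqN : (size (p - q)%R <= N)%N by rewrite (leq_trans (size_polyD _ _)) ?size_polyN.
rewrite !(moment_widen (N := N)) ?leq_maxl ?leq_maxr // -sumrB.
by apply: eq_bigr => j _; rewrite coefB rmorphB mulrBl.
Qed.

HB.instance Definition _ :=
  GRing.isZmodMorphism.Build {poly rat} F moment moment_is_zmod_morphism.

Lemma momentZ c p : moment (c *: p) = ratr c * moment p.
Proof.
rewrite (moment_widen (size_scale_leq c p)) /moment big_distrr /=.
by apply: eq_bigr => j _; rewrite coefZ rmorphM mulrA.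
Qed.

Lemma moment_Xn k : moment 'X^k = gamma k.
Proof.
rewrite /moment size_polyXn big_ord_recr /= big1 ?add0r => [|j _].
  by rewrite coefXn eqxx rmorph1 mul1r.
by rewrite coefXn ltn_eqF //= rmorph0 mul0r.
Qed.

Lemma moment_X_mul_u_exp j : moment ('X * ('X - 'X^2) ^+ j) =
  \sum_(k < j.+1) (-1) ^+ k * 'C(j, k)%:R * gamma (j.+1 + k)%N.
Proof.
have -> : 'X * ('X - 'X^2) ^+ j = 'X^(j.+1) * (1 - 'X) ^+ j :> {poly rat}.
  by rewrite [in RHS]exprS -mulrA -exprMn mulrBr mulr1 -expr2.
rewrite exprBn mulr_sumr raddf_sum; apply: eq_bigr => k _ /=.
have -> : 'X^(j.+1) * ((-1) ^+ k * 1 ^+ (j - k) * 'X^k *+ 'C(j, k)) =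
    ((-1) ^+ k * 'C(j, k)%:R) *: 'X^(j.+1 + k) :> {poly rat}.
  rewrite -mul_polyC rmorphM rmorphXn rmorphN1 rmorph_nat exprD expr1n; ring.
by rewrite momentZ moment_Xn rmorphM rmorphXn rmorphN1 rmorph_nat.
Qed.

Lemma symplecticE :
  symplectic gamma <-> forall q, moment ('X * (q \Po ('X - 'X^2))) = 0.
Proof.
split=> [sympl q | moment_u m m_gt0].
  rewrite comp_polyE mulr_sumr raddf_sum big1 // => i _.
  by rewrite /= -scalerAr momentZ moment_X_mul_u_exp (sympl i.+1) ?mulr0.
by have := moment_u 'X^(m.-1); rewrite comp_Xn_poly moment_X_mul_u_exp prednK.
Qed.

Lemma moment_X_euler_poly n : gamma (2 * n).+1 =
  \sum_(i < n.+1) ratr (ebrack n i) * gamma (2 * i)%N + moment ('X * E (2 * n)).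
Proof.
rewrite -moment_Xn exprS -(subrK (E (2 * n)) 'X^(2 * n)) mulrDr raddfD.
rewrite X_euler_rest_expansion raddf_sum; congr (_ + _).
by apply: eq_bigr => i _; rewrite /= momentZ moment_Xn.
Qed.

Lemma symplectic_euler_rule : symplectic gamma <->
  forall n, gamma (2 * n).+1 = \sum_(i < n.+1) ratr (ebrack n i) * gamma (2 * i)%N.
Proof.
have rule_iff n : gamma (2 * n).+1 = \sum_(i < n.+1) ratr (ebrack n i) * gamma (2 * i)%N
    <-> moment ('X * E (2 * n)) = 0.
  by rewrite moment_X_euler_poly -[X in _ = X <-> _]addr0; split=> [/addrI | ->].
rewrite symplecticE; split=> [moment_u n | rule].
  by apply/rule_iff; have [f -> _] := euler_poly_comp n; apply: moment_u.
apply: poly_span_size_basis => [|c p q Pp Pq|n].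
- by rewrite comp_poly0 mulr0 raddf0.
- by rewrite comp_polyD comp_polyZ mulrDr -scalerAr raddfD /= momentZ Pp Pq mulr0 addr0.
- have [f E_f size_f] := euler_poly_comp n.
  by exists f => //; rewrite -E_f; apply/rule_iff.
Qed.

End MomentFunctional.

Lemma exists_unique_symplectic (F : numFieldType) (a : nat -> F) :
  exists! gamma : nat -> F, symplectic gamma /\ forall n, gamma (2 * n)%N = a n.
Proof.
pose g k := if odd k then \sum_(i < k./2.+1) ratr (ebrack k./2 i) * a i else a k./2.
have g_even n : g (2 * n)%N = a n by rewrite /g mul2n odd_double doubleK.
have g_odd n : g (2 * n).+1 = \sum_(i < n.+1) ratr (ebrack n i) * a i.
  by rewrite /g /= mul2n odd_double /= uphalf_double.
exists g; split.
  split=> //; apply/symplectic_euler_rule => n.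
  by rewrite g_odd; apply: eq_bigr => i _; rewrite g_even.
move=> h [/symplectic_euler_rule h_rule h_even]; apply: funext => k.
rewrite -(odd_double_half k) -mul2n; case: (odd k); last by rewrite add0n g_even h_even.
by rewrite add1n g_odd h_rule; apply: eq_bigr => i _; rewrite h_even.
Qed.

Theorem theorem5p1 (R : realType) :
  (forall gamma : nat -> R[i],
      symplectic gamma <->
      (forall n : nat,
          gamma (2 * n).+1 = \sum_(i < n.+1) ratr (ebrack n i) * gamma (2 * i)%N))
  /\
  (forall a : nat -> R[i],
      exists! gamma : nat -> R[i],
        symplectic gamma /\ (forall n : nat, gamma (2 * n)%N = a n)).
Proof.
split=> [gamma | a]; [exact: symplectic_euler_rule | exact: exists_unique_symplectic].
Qed.
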